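(* Let $X$ and $Y$ be completely regular Hausdorff spaces and $c: X\times Y\to\mathbb{R}$ a bounded function with property (H). Let $R: C_b(X)\times C_b(Y)\to\mathbb{R}\cup\{-\infty\}$ be a proper function (not identically $-\infty$) such that: (i) $R$ is $\oplus$-nondecreasing; (ii) for every $C\in\mathcal{E}(X)$ and $D\in\mathcal{E}(Y)$, the restriction of $R$ to $C\times D$ is upper semicontinuous for the product of the topologies $\mathcal{T}_p$ (pointwise convergence) on $C$ and on $D$. Then the problem $$v_{\max}(\mathbf{GDP}):=\sup\{R(\xi,\zeta):\ \xi\in C_b(X),\ \zeta\in C_b(Y),\ \xi\oplus\zeta\le c\}$$ has a solution of the form $(\xi_0^{c\bar c},\xi_0^c)\in C_b(X)\times C_b(Y)$ for some $\xi_0\in C_b(X)$; i.e. $\xi_0^{c\bar c}\oplus\xi_0^c\le c$ and $R(\xi_0^{c\bar c},\xi_0^c)=v_{\max}(\mathbf{GDP})$.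
   Context: $C_b(Z)$: real-valued bounded continuous functions on $Z$; $\mathcal{T}_p$: topology of pointwise convergence; $\mathcal{E}(Z)$: family of uniformly bounded equicontinuous subsets of $C_b(Z)$. $(\phi\oplus\psi)(x,y):=\phi(x)+\psi(y)$, and $\phi\oplus\psi\le\phi'\oplus\psi'$ means pointwise inequality on $X\times Y$. $R$ is $\oplus$-nondecreasing if $\phi\oplus\psi\le\phi'\oplus\psi'$ implies $R(\phi,\psi)\le R(\phi',\psi')$. For $\xi: X\to\mathbb{R}$, $\xi^c(y):=\inf_{x\in X}\{c(x,y)-\xi(x)\}$; for $\zeta:Y\to\mathbb{R}$, $\zeta^{\bar c}(x):=\inf_{y\in Y}\{c(x,y)-\zeta(y)\}$; $\xi^{c\bar c}:=(\xi^c)^{\bar c}$. With $\overline{d}_c(x,x'):=\sup_{y}|c(x,y)-c(x',y)|$ and $\underline{d}_c(y,y'):=\sup_{x}|c(x,y)-c(x,y')|$, $c$ has property (H) if $\lim_{x\to x_0}\overline{d}_c(x,x_0)=0$ for every $x_0\in X$ and $\lim_{y\to y_0}\underline{d}_c(y,y_0)=0$ for every $y_0\in Y$. *)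

From HB Require Import structures.
From mathcomp Require Import all_boot all_order all_algebra.
From mathcomp Require Import all_classical all_reals all_analysis.
Set Implicit Arguments. Unset Strict Implicit. Unset Printing Implicit Defensive.
Import Order.TTheory GRing.Theory Num.Theory numFieldNormedType.Exports.
Local Open Scope classical_set_scope.
Local Open Scope ring_scope.

Section Defs.
Context {R : realType}.

Definition bounded_fun {Z : Type} (f : Z -> R) := exists M : R, forall z, `|f z| <= M.

Definition Cb {Z : topologicalType} (f : Z -> R) := continuous f /\ bounded_fun f.

Definition unif_bounded {Z : Type} (W : set (Z -> R)) :=
  exists M : R, forall f, W f -> forall z, `|f z| <= M.

(* E(Z): uniformly bounded equicontinuous subsets of C_b(Z) *)
Definition EqBd {Z : topologicalType} (W : set (Z -> R)) :=
  (forall f, W f -> Cb f) /\ unif_bounded W /\ @equicontinuous Z R _ W id.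

Definition oplus_le {X Y : Type} (phi : X -> R) (psi : Y -> R) (phi' : X -> R) (psi' : Y -> R) :=
  forall x y, phi x + psi y <= phi' x + psi' y.

Definition oplus_le_c {X Y : Type} (xi : X -> R) (zeta : Y -> R) (c : X -> Y -> R) :=
  forall x y, xi x + zeta y <= c x y.

Definition ctrans {X Y : Type} (c : X -> Y -> R) (xi : X -> R) : Y -> R :=
  fun y => inf [set c x y - xi x | x in [set: X]].
Definition cbtrans {X Y : Type} (c : X -> Y -> R) (zeta : Y -> R) : X -> R :=
  fun x => inf [set c x y - zeta y | y in [set: Y]].

Definition dbar_c {X Y : Type} (c : X -> Y -> R) (x x' : X) : R :=
  sup [set `|c x y - c x' y| | y in [set: Y]].
Definition dund_c {X Y : Type} (c : X -> Y -> R) (y y' : Y) : R :=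
  sup [set `|c x y - c x y'| | x in [set: X]].

Definition propH {X Y : topologicalType} (c : X -> Y -> R) :=
  (forall x0 : X, dbar_c c x x0 @[x --> x0] --> (0 : R)) /\
  (forall y0 : Y, dund_c c y y0 @[y --> y0] --> (0 : R)).

Definition usc_on {T : topologicalType} (A : set T) (f : T -> \bar R) :=
  forall x, A x -> forall a : R, (f x < a%:E)%E ->
    exists2 V, nbhs x V & forall y, A y -> V y -> (f y < a%:E)%E.

Definition vmax {X Y : topologicalType} (c : X -> Y -> R)
    (Rf : (X -> R) -> (Y -> R) -> \bar R) : \bar R :=
  ereal_sup [set r | exists xi zeta, [/\ Cb xi, Cb zeta, oplus_le_c xi zeta c &
                                         r = Rf xi zeta]].
End Defs.

From Pilot Require Import Defs.
From HB Require Import structures.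
From mathcomp Require Import all_boot all_order all_algebra.
From mathcomp Require Import all_classical all_reals all_analysis.
From mathcomp Require Import lra.

(* Every admissible pair (xi, zeta) is dominated, in the order that R respects,
   by (g^cbar, g) where g := xi^c - xi^c(y0).  These dominating pairs are bounded
   by 3 sup|c| and have moduli of continuity dbar_c and dund_c, so by property (H)
   they form equicontinuous families; their set is closed for the pointwise
   topologies, hence compact by Tychonoff, and the upper semicontinuous R attains
   its maximum on it at some (xi0, zeta0).  As (xi0^{c cbar}, xi0^c) is admissible
   and dominates (xi0, zeta0), it is a maximizer too. *)

Set Implicit Arguments.
Unset Strict Implicit.
Unset Printing Implicit Defensive.

Import Order.TTheory GRing.Theory Num.Theory numFieldNormedType.Exports.
Local Open Scope classical_set_scope.
Local Open Scope ring_scope.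

Section InfSupImage.
Context {R : realType} {T : Type} (h : T -> R).

Lemma inf_image_le m t : (forall t, m <= h t) -> inf [set h t | t in setT] <= h t.
Proof.
move=> hm; apply: ge_inf; last by exists t.
by exists m => _ [s _ <-].
Qed.

Lemma le_inf_image m : inhabited T -> (forall t, m <= h t) ->
  m <= inf [set h t | t in setT].
Proof.
move=> [t0] hm; apply: lb_le_inf; first by exists (h t0), t0.
by move=> _ [s _ <-].
Qed.

Lemma le_sup_image m t : (forall t, h t <= m) -> h t <= sup [set h t | t in setT].
Proof.
move=> hm; apply: ub_le_sup; last by exists t.
by exists m => _ [s _ <-].
Qed.

Lemma sup_image_le m : inhabited T -> (forall t, h t <= m) ->
  sup [set h t | t in setT] <= m.
Proof.
move=> [t0] hm; apply: ge_sup; first by exists (h t0), t0.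
by move=> _ [s _ <-].
Qed.

End InfSupImage.

Section CTransform.
Context {R : realType} {X Y : Type} (c : X -> Y -> R) (M : R).
Hypothesis c_le : forall x y, `|c x y| <= M.
Hypothesis X0 : inhabited X.

Lemma ctrans_le (xi : X -> R) : Defs.bounded_fun xi ->
  forall x y, ctrans c xi y <= c x y - xi x.
Proof.
move=> [B hB] x y; apply: (@inf_image_le _ _ _ (- M - B)) => t.
by move: (c_le t y) (hB t); rewrite !ler_norml => /andP[? ?] /andP[? ?]; lra.
Qed.

Lemma ctrans_admissible (xi : X -> R) :
  Defs.bounded_fun xi -> oplus_le_c xi (ctrans c xi) c.
Proof. by move=> hb x y; have := ctrans_le hb x y; lra. Qed.

Lemma le_ctrans (xi : X -> R) (zeta : Y -> R) : oplus_le_c xi zeta c ->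
  forall y, zeta y <= ctrans c xi y.
Proof. by move=> adm y; apply: le_inf_image => // x; have := adm x y; lra. Qed.

Lemma le_dund_c x y y' : `|c x y - c x y'| <= dund_c c y y'.
Proof.
apply: (@le_sup_image _ _ (fun x => `|c x y - c x y'|) (M + M)) => t.
exact: le_trans (ler_normB _ _) (lerD (c_le _ _) (c_le _ _)).
Qed.

Lemma dund_c_le y y' : dund_c c y y' <= M + M.
Proof.
apply: sup_image_le => // t.
exact: le_trans (ler_normB _ _) (lerD (c_le _ _) (c_le _ _)).
Qed.

Lemma ctrans_lipschitz (xi : X -> R) : Defs.bounded_fun xi ->
  forall y y', `|ctrans c xi y - ctrans c xi y'| <= dund_c c y y'.
Proof.
move=> hb y y'; rewrite ler_norml; apply/andP; split.
- suff : ctrans c xi y' - dund_c c y y' <= ctrans c xi y by lra.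
  apply: le_inf_image => // x.
  move: (ctrans_le hb x y') (le_dund_c x y y'); rewrite ler_norml => ? /andP[? ?].
  lra.
- suff : ctrans c xi y - dund_c c y y' <= ctrans c xi y' by lra.
  apply: le_inf_image => // x.
  move: (ctrans_le hb x y) (le_dund_c x y y'); rewrite ler_norml => ? /andP[? ?].
  lra.
Qed.

Lemma ctrans_norm_le (xi : X -> R) B : (forall x, `|xi x| <= B) ->
  forall y, `|ctrans c xi y| <= M + B.
Proof.
move=> hB y; have [x0] := X0; rewrite ler_norml; apply/andP; split.
- apply: le_inf_image => // x.
  by move: (c_le x y) (hB x); rewrite !ler_norml => /andP[? ?] /andP[? ?]; lra.
- move: (ctrans_le (ex_intro _ B hB) x0 y) (c_le x0 y) (hB x0).
  by rewrite !ler_norml => ? /andP[? ?] /andP[? ?]; lra.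
Qed.

Lemma ctrans_bounded (xi : X -> R) :
  Defs.bounded_fun xi -> Defs.bounded_fun (ctrans c xi).
Proof. by move=> [B hB]; exists (M + B); exact: ctrans_norm_le. Qed.

End CTransform.

Section CbarTransform.
Context {R : realType} {X Y : Type} (c : X -> Y -> R) (M : R).
Hypothesis c_le : forall x y, `|c x y| <= M.
Hypothesis Y0 : inhabited Y.

Let ct_le : forall y x, `|c x y| <= M. Proof. by move=> y x; exact: c_le. Qed.

Lemma cbtrans_admissible (zeta : Y -> R) : Defs.bounded_fun zeta ->
  oplus_le_c (cbtrans c zeta) zeta c.
Proof. by move=> hb x y; have := ctrans_admissible ct_le hb y x; lra. Qed.

Lemma le_cbtrans (xi : X -> R) (zeta : Y -> R) : oplus_le_c xi zeta c ->
  forall x, xi x <= cbtrans c zeta x.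
Proof.
by move=> adm; apply: (@le_ctrans _ Y X (fun y x => c x y)) => // y x; rewrite addrC.
Qed.

Lemma cbtrans_lipschitz (zeta : Y -> R) : Defs.bounded_fun zeta ->
  forall x x', `|cbtrans c zeta x - cbtrans c zeta x'| <= dbar_c c x x'.
Proof. exact: (ctrans_lipschitz ct_le). Qed.

Lemma cbtrans_norm_le (zeta : Y -> R) B : (forall y, `|zeta y| <= B) ->
  forall x, `|cbtrans c zeta x| <= M + B.
Proof. exact: (ctrans_norm_le ct_le). Qed.

Lemma cbtrans_bounded (zeta : Y -> R) :
  Defs.bounded_fun zeta -> Defs.bounded_fun (cbtrans c zeta).
Proof. exact: (ctrans_bounded ct_le). Qed.

End CbarTransform.

Definition modulus_bounded {R : realType} {Z : Type} (d : Z -> Z -> R) (B : R) :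
    set (Z -> R) :=
  [set f | (forall z, `|f z| <= B) /\ forall z z', `|f z - f z'| <= d z z'].

Definition admissible_pairs {R : realType} {X Y : Type} (c : X -> Y -> R) (B : R) :
    set ((X -> R) * (Y -> R)) :=
  modulus_bounded (dbar_c c) B `*` modulus_bounded (dund_c c) B `&`
  [set p | oplus_le_c p.1 p.2 c].

Section Domination.
Context {R : realType} {X Y : Type} (c : X -> Y -> R) (M : R).
Hypothesis c_le : forall x y, `|c x y| <= M.
Hypotheses (X0 : inhabited X) (Y0 : inhabited Y).

Lemma ctrans_shift_dominates (xi : X -> R) (zeta : Y -> R) (a : R) :
  Defs.bounded_fun xi -> oplus_le_c xi zeta c ->
  oplus_le xi zeta (cbtrans c (fun y => ctrans c xi y - a)) (fun y => ctrans c xi y - a).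
Proof.
move=> hb adm x y.
have le_zeta := le_ctrans X0 adm y.
have /(le_cbtrans Y0)/(_ x) : oplus_le_c (fun x => xi x + a)
    (fun y => ctrans c xi y - a) c.
  by move=> x' y'; have := ctrans_admissible c_le hb x' y'; lra.
lra.
Qed.

Lemma ctrans_dominates (xi : X -> R) (zeta : Y -> R) :
  Defs.bounded_fun xi -> oplus_le_c xi zeta c ->
  oplus_le xi zeta (cbtrans c (ctrans c xi)) (ctrans c xi).
Proof.
move=> hb adm; have := ctrans_shift_dominates 0 hb adm.
by rewrite (_ : (fun y => _ - 0) = ctrans c xi) //; apply/funext => y; rewrite subr0.
Qed.

Lemma admissible_pairs_dominate (xi : X -> R) (zeta : Y -> R) :
  Defs.bounded_fun xi -> oplus_le_c xi zeta c ->
  exists2 p, admissible_pairs c (M + M + M) p & oplus_le xi zeta p.1 p.2.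
Proof.
move=> hb adm; have [y0] := Y0.
(* Shifting [xi^c] to vanish at [y0] bounds it by [2M], since [dund_c c <= 2M]. *)
pose g y := ctrans c xi y - ctrans c xi y0.
have g_lip y y' : `|g y - g y'| <= dund_c c y y'.
  by rewrite /g opprB addrA subrK; exact: ctrans_lipschitz.
have g_le y : `|g y| <= M + M.
  have -> : g y = g y - g y0 by rewrite /g subrr subr0.
  exact: le_trans (g_lip y y0) (dund_c_le c_le X0 y y0).
have g_bd : Defs.bounded_fun g by exists (M + M).
exists (cbtrans c g, g); last exact: ctrans_shift_dominates.
split; [split|].
- by split; [rewrite -addrA; exact: cbtrans_norm_le | exact: cbtrans_lipschitz].
- split=> // y; apply: le_trans (g_le y) _.
  by have [x0] := X0; have := le_trans (normr_ge0 _) (c_le x0 y0); lra.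
- exact: cbtrans_admissible.
Qed.

Lemma admissible_pairs_neq0 : admissible_pairs c (M + M + M) !=set0.
Proof.
have [||p Sp _] := @admissible_pairs_dominate (fun _ => - M) (fun _ => 0).
- by exists `|M| => _; rewrite normrN.
- by move=> x y; have := c_le x y; rewrite ler_norml addr0 => /andP[].
- by exists p.
Qed.

End Domination.

Section Modulus.
Context {R : realType} {Z : topologicalType} (d : Z -> Z -> R).
Hypothesis d_cvg0 : forall z0, d z z0 @[z --> z0] --> (0 : R).

Lemma modulus_equicontinuous (W : set (Z -> R)) :
  (forall f, W f -> forall z z0, `|f z - f z0| <= d z z0) ->
  @equicontinuous Z R _ W id.
Proof.
move=> hW z0 E; rewrite -entourage_ballE => -[e /= e0 sE].
have /cvgrPdist_lt/(_ e e0) := d_cvg0 z0; apply: filterS => z.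
rewrite sub0r normrN => dz f Wf; apply: sE => /=.
rewrite /ball /= distrC; apply: le_lt_trans dz.
exact: le_trans (hW f Wf z z0) (ler_norm _).
Qed.

Lemma modulus_continuous (f : Z -> R) :
  (forall z z0, `|f z - f z0| <= d z z0) -> continuous f.
Proof.
move=> hf; apply: (@equicontinuous_continuous _ _ _ [set f] id) => //.
by apply: modulus_equicontinuous => g ->.
Qed.

Lemma EqBd_modulus_bounded B : EqBd (modulus_bounded d B).
Proof.
have eqc : @equicontinuous Z R _ (modulus_bounded d B) id.
  by apply: modulus_equicontinuous => f [].
split; last by split; [exists B => f [] | exact: eqc].
by move=> f Wf; split; [exact: equicontinuous_continuous eqc Wf | exists B; case: Wf].
Qed.

End Modulus.

Section CbTransforms.
Context {R : realType} {X Y : topologicalType} (c : X -> Y -> R) (M : R).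
Hypothesis c_le : forall x y, `|c x y| <= M.
Hypotheses (X0 : inhabited X) (Y0 : inhabited Y) (cH : propH c).

Lemma Cb_ctrans (xi : X -> R) : Defs.bounded_fun xi -> Cb (ctrans c xi).
Proof.
move=> hb; split; last exact: (ctrans_bounded c_le X0 hb).
exact: (modulus_continuous cH.2 (ctrans_lipschitz c_le X0 hb)).
Qed.

Lemma Cb_cbtrans (zeta : Y -> R) : Defs.bounded_fun zeta -> Cb (cbtrans c zeta).
Proof.
move=> hb; split; last exact: (cbtrans_bounded c_le Y0 hb).
exact: (modulus_continuous cH.1 (cbtrans_lipschitz c_le Y0 hb)).
Qed.

End CbTransforms.

Lemma closure_le {R : realType} {T : topologicalType} (A : set T) (phi : T -> R) k :
  continuous phi -> (forall t, A t -> phi t <= k) ->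
  forall t, closure A t -> phi t <= k.
Proof.
move=> cphi Ale t Acl; apply: (preimage_closed (fun u _ => cphi u) (@closed_le _ k)).
by move=> E /Acl [u [Au Eu]]; exists u; split => //; exact: Ale.
Qed.

Lemma ptws_ball_compact {R : realType} {Z : topologicalType} (B : R) :
  compact [set f : {ptws Z -> R} | forall z, `|f z| <= B].
Proof.
rewrite (_ : [set f | _] = [set f : {ptws Z -> R} | forall z, `[- B, B]%classic (f z)]).
  exact: tychonoff (fun _ => @segment_compact R _ _).
by apply/funext => f; apply/propext; split => h z; have := h z;
  rewrite /= in_itv /= ler_norml.
Qed.

Section AdmissiblePairsCompact.
Context {R : realType} {X Y : topologicalType} (c : X -> Y -> R) (B : R).
Let P := ({ptws X -> R} * {ptws Y -> R})%type.

Lemma closed_admissible_pairs : closed (admissible_pairs c B : set P).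
Proof.
have ev1 x : continuous (fun p : P => p.1 x).
  move=> p; apply: (@continuous_comp _ _ _ fst (fun f : {ptws X -> R} => f x)).
    exact: cvg_fst.
  exact: (@proj_continuous X (fun _ => R) x).
have ev2 y : continuous (fun p : P => p.2 y).
  move=> p; apply: (@continuous_comp _ _ _ snd (fun f : {ptws Y -> R} => f y)).
    exact: cvg_snd.
  exact: (@proj_continuous Y (fun _ => R) y).
have cnorm (phi : P -> R) : continuous phi -> continuous (fun p => `|phi p|).
  by move=> cphi p; apply: continuous_comp (cphi p) (@norm_continuous _ R^o _).
have cB (phi psi : P -> R) : continuous phi -> continuous psi ->
    continuous (fun p => phi p - psi p).
  by move=> cphi cpsi p; exact: (@continuousB R R^o P phi psi p (cphi p) (cpsi p)).
move=> p clp; have le_cl (phi : P -> R) k :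
    continuous phi -> (forall q, admissible_pairs c B q -> phi q <= k) -> phi p <= k.
  by move=> cphi hle; exact: closure_le cphi hle p clp.
split; [split; split|].
- move=> x; apply: (le_cl (fun q => `|q.1 x|)); first exact: cnorm.
  by move=> q [[[+ _] _] _]; apply.
- move=> x x'; apply: (le_cl (fun q => `|q.1 x - q.1 x'|)); first exact/cnorm/cB.
  by move=> q [[[_ +] _] _]; apply.
- move=> y; apply: (le_cl (fun q => `|q.2 y|)); first exact: cnorm.
  by move=> q [[_ [+ _]] _]; apply.
- move=> y y'; apply: (le_cl (fun q => `|q.2 y - q.2 y'|)); first exact/cnorm/cB.
  by move=> q [[_ [_ +]] _]; apply.
- move=> x y; apply: (le_cl (fun q => q.1 x + q.2 y)).
    by move=> q; exact: (@continuousD R R^o P _ _ q (ev1 x q) (ev2 y q)).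
  by move=> q [_ +]; apply.
Qed.

Lemma compact_admissible_pairs : compact (admissible_pairs c B : set P).
Proof.
apply: (subclosed_compact closed_admissible_pairs (compact_setX
  (ptws_ball_compact (Z := X) (B := B)) (ptws_ball_compact (Z := Y) (B := B)))).
by move=> p [[[hb1 _] [hb2 _]] _].
Qed.

End AdmissiblePairsCompact.

Section UscMaximum.
Context {R : realType}.
Local Open Scope ereal_scope.

Lemma EFin_between (x y : \bar R) : x < y -> exists r : R, x < r%:E < y.
Proof.
case: x y => [x| |] [y| |] //= lt_xy.
- by have [? ?] := midf_lt lt_xy; exists ((x + y) / 2)%R; rewrite !lte_fin; apply/andP.
- by exists (x + 1)%R; rewrite lte_fin ltrDl ltr01 ltry.
- by exists (y - 1)%R; rewrite ltNyr lte_fin gtrDl ltrN10.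
- by exists 0%R; rewrite ltNyr ltry.
Qed.

Lemma usc_onS {T : topologicalType} (A B : set T) (f : T -> \bar R) :
  A `<=` B -> usc_on B f -> usc_on A f.
Proof.
move=> AB f_usc x Ax a fxa; have [V xV Va] := f_usc x (AB x Ax) a fxa.
by exists V => // y Ay; exact/Va/AB.
Qed.

Lemma usc_compact_attains_max {T : topologicalType} (S : set T) (f : T -> \bar R) :
  compact S -> S !=set0 -> usc_on S f ->
  exists2 p, S p & forall q, S q -> f q <= f p.
Proof.
move=> cptS [s Ss] f_usc.
pose v := ereal_sup (f @` S).
suff [p Sp le_vf] : exists2 p, S p & v <= f p.
  by exists p => // q Sq; apply: le_trans le_vf; apply: ereal_sup_ubound; exists q.
have [->|vNy] := eqVneq v -oo; first by exists s; rewrite ?leNye.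
have [|a0 /andP[_ a0v]] := @EFin_between (-oo) v; first by rewrite ltNye.
pose F := filter_from [set a : R | a%:E < v] (fun a => S `&` [set q | a%:E < f q]).
have F_proper : ProperFilter F.
  apply: filter_from_proper; last first.
    by move=> a /ereal_sup_gt [_ [q Sq <-]] afq; exists q.
  apply: filter_from_filter; first by exists a0.
  move=> a b av bv; exists (Num.max a b); first by rewrite /= EFin_max gt_max av bv.
  by move=> q [Sq]; rewrite /= EFin_max gt_max => /andP[aq bq].
have [|p [Sp p_cluster]] := cptS F F_proper; first by exists a0 => // q [].
exists p => //; rewrite leNgt; apply/negP => /EFin_between [a /andP[fpa av]].
have [V pV Vlt] := f_usc p Sp a fpa.
have [q [[Sq aq] Vq]] := p_cluster _ V (ex_intro2 _ _ a av (fun _ h => h)) pV.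
by have := Vlt q Sq Vq; rewrite ltNge (ltW aq).
Qed.

End UscMaximum.

Theorem mainTheorem3 (R : realType) (X Y : topologicalType)
  (hX : hausdorff_space X) (hY : hausdorff_space Y)
  (crX : completely_regular_space X) (crY : completely_regular_space Y)
  (neX : inhabited X) (neY : inhabited Y)
  (c : X -> Y -> R)
  (cbd : exists M : R, forall x y, `|c x y| <= M)
  (cH : propH c)
  (Rf : (X -> R) -> (Y -> R) -> \bar R)
  (Rval : forall phi psi, Cb phi -> Cb psi -> Rf phi psi != +oo%E)
  (Rproper : exists phi psi, [/\ Cb phi, Cb psi & Rf phi psi != -oo%E])
  (Rmono : forall phi psi phi' psi', Cb phi -> Cb psi -> Cb phi' -> Cb psi' ->
     oplus_le phi psi phi' psi' -> (Rf phi psi <= Rf phi' psi')%E)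
  (Rusc : forall (C : set (X -> R)) (D : set (Y -> R)), EqBd C -> EqBd D ->
     @usc_on R ({ptws X -> R} * {ptws Y -> R})%type (C `*` D)
       (fun p => Rf p.1 p.2)) :
  exists xi0 : X -> R,
    [/\ Cb xi0, Cb (cbtrans c (ctrans c xi0)), Cb (ctrans c xi0),
        oplus_le_c (cbtrans c (ctrans c xi0)) (ctrans c xi0) c &
        Rf (cbtrans c (ctrans c xi0)) (ctrans c xi0) = vmax c Rf].
Proof.
have [M c_le] := cbd; pose S := admissible_pairs c (M + M + M).
have EqBdX := EqBd_modulus_bounded cH.1 (M + M + M).
have EqBdY := EqBd_modulus_bounded cH.2 (M + M + M).
have S_Cb p : S p -> Cb p.1 /\ Cb p.2 by move=> [[/EqBdX.1 ? /EqBdY.1 ?] _].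
have [p Sp p_max] : exists2 p : {ptws X -> R} * {ptws Y -> R}, S p &
    forall q, S q -> (Rf q.1 q.2 <= Rf p.1 p.2)%E.
  apply: usc_compact_attains_max; first exact: compact_admissible_pairs.
    exact: admissible_pairs_neq0 c_le neX neY.
  by apply: usc_onS (Rusc _ _ EqBdX EqBdY) => q [].
have [[Cp1 Cp2] [_ p_adm]] := (S_Cb p Sp, Sp).
have p1cb := ctrans_bounded c_le neX Cp1.2.
have Cc := Cb_ctrans c_le neX cH Cp1.2.
have Ccc := Cb_cbtrans c_le neY cH p1cb.
have p1cc_adm := cbtrans_admissible c_le p1cb.
exists p.1; split => //; apply/eqP; rewrite eq_le; apply/andP; split.
  by apply: ereal_sup_ubound; exists (cbtrans c (ctrans c p.1)), (ctrans c p.1).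
apply: ge_ereal_sup => _ [xi [zeta [Cxi Czeta adm ->]]].
have [q Sq le_q] := admissible_pairs_dominate c_le neX neY Cxi.2 adm.
have [Cq1 Cq2] := S_Cb q Sq.
apply: le_trans (Rmono _ _ _ _ Cxi Czeta Cq1 Cq2 le_q) (le_trans (p_max q Sq) _).
exact: Rmono (ctrans_dominates c_le neX neY Cp1.2 p_adm).
Qed.
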